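(* Let $$E=\begin{bmatrix} J_{k,a} & J_{k,b} & -J_{k,c} & -J_{k,d} & J_{k,e} & -J_{k,f} & 0 & 0 \\ -J_{k,a} & -J_{k,b} & J_{k,c} & J_{k,d} & -J_{k,e} & J_{k,f} & 0 & 0 \\ J_{l,a} & -J_{l,b} & J_{l,c} & -J_{l,d} & 0 & 0 & J_{l,g} & -J_{l,h} \\ -J_{l,a} & J_{l,b} & -J_{l,c} & J_{l,d} & 0 & 0 & -J_{l,g} & J_{l,h} \\ \end{bmatrix}$$ where any column index in each block is a nonnegative integer, and $k,l>0$, $a+b+c+d>0$, $e+f>0$, $g+h>0$, $E\mathbf{1}=0$ and $\mathbf{1}^TE=0^T$. Let \begin{align*} A=\begin{bmatrix} 0 & 0 & J_{k,c} & J_{k,d} & 0 & J_{k,f} & X_{11} & X_{12} \\ J_{k,a} & J_{k,b} & 0 & 0 & J_{k,e} & 0 & X_{21} & X_{22} \\ 0 & J_{l,b} & 0 & J_{l,d} & Y_{11} & Y_{12} & 0 & J_{l,h} \\ J_{l,a} & 0 & J_{l,c} & 0 & Y_{21} & Y_{22} & J_{l,g} & 0 \\ \end{bmatrix} \end{align*} where each block of $A$ is a $(0,1)$ matrix. Then, $A$ and $A+E$ are Gram mates if and only if the following conditions are satisfied: \begin{enumerate} \item $\mathbf{1}^TX_{1i}=\mathbf{1}^TX_{2i}$ and $\mathbf{1}^TY_{1i}=\mathbf{1}^TY_{2i}$ for $i=1,2$; \item $\begin{bmatrix} X_{11} & X_{12}\\ X_{21} & X_{22} \end{bmatrix}\begin{bmatrix}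 \mathbf{1}\\ -\mathbf{1} \end{bmatrix}=\frac{g-h}{2}\begin{bmatrix} \mathbf{1}\\ \mathbf{1} \end{bmatrix}$ and $\begin{bmatrix} Y_{11} & Y_{12}\\ Y_{21} & Y_{22} \end{bmatrix}\begin{bmatrix} \mathbf{1}\\ -\mathbf{1} \end{bmatrix}=\frac{e-f}{2}\begin{bmatrix} \mathbf{1}\\ \mathbf{1} \end{bmatrix}$ where $g-h$ and $e-f$ are even. \end{enumerate}
   Context: $J_{p,q}$ denotes the $p\times q$ all-ones matrix (absent if $p=0$ or $q=0$) and $\mathbf{1}$ an all-ones column vector of appropriate size. Two $(0,1)$ matrices $A\neq B$ are Gram mates if $AA^T=BB^T$ and $A^TA=B^TB$. *)

From HB Require Import structures.
From mathcomp Require Import all_boot all_order all_algebra.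
Set Implicit Arguments. Unset Strict Implicit. Unset Printing Implicit Defensive.
Import Order.TTheory GRing.Theory Num.Theory.
Local Open Scope ring_scope.

Definition J (p q : nat) : 'M[int]_(p, q) := const_mx 1.

Definition is01 (m n : nat) (M : 'M[int]_(m, n)) : Prop :=
  forall i j, M i j = 0 \/ M i j = 1.

Definition gram_mates (m n : nat) (A B : 'M[int]_(m, n)) : Prop :=
  [/\ is01 A, is01 B, A <> B, A *m A^T = B *m B^T & A^T *m A = B^T *m B].

Definition row8 (r a b c d e f g h : nat)
  (B1 : 'M[int]_(r, a)) (B2 : 'M[int]_(r, b)) (B3 : 'M[int]_(r, c))
  (B4 : 'M[int]_(r, d)) (B5 : 'M[int]_(r, e)) (B6 : 'M[int]_(r, f))
  (B7 : 'M[int]_(r, g)) (B8 : 'M[int]_(r, h))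
  : 'M[int]_(r, a + (b + (c + (d + (e + (f + (g + h))))))) :=
  row_mx B1 (row_mx B2 (row_mx B3 (row_mx B4 (row_mx B5 (row_mx B6 (row_mx B7 B8)))))).

Definition col4 (k l n : nat) (R1 R2 : 'M[int]_(k, n)) (R3 R4 : 'M[int]_(l, n))
  : 'M[int]_(k + (k + (l + l)), n) :=
  col_mx R1 (col_mx R2 (col_mx R3 R4)).

Definition Emat (k l a b c d e f g h : nat) :=
  col4
    (row8 (J k a) (J k b) (- J k c) (- J k d) (J k e) (- J k f) 0 0)
    (row8 (- J k a) (- J k b) (J k c) (J k d) (- J k e) (J k f) 0 0)
    (row8 (J l a) (- J l b) (J l c) (- J l d) 0 0 (J l g) (- J l h))
    (row8 (- J l a) (J l b) (- J l c) (J l d) 0 0 (- J l g) (J l h)).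

Definition Amat (k l a b c d e f g h : nat)
  (X11 : 'M[int]_(k, g)) (X12 : 'M[int]_(k, h))
  (X21 : 'M[int]_(k, g)) (X22 : 'M[int]_(k, h))
  (Y11 : 'M[int]_(l, e)) (Y12 : 'M[int]_(l, f))
  (Y21 : 'M[int]_(l, e)) (Y22 : 'M[int]_(l, f)) :=
  col4
    (row8 0 0 (J k c) (J k d) 0 (J k f) X11 X12)
    (row8 (J k a) (J k b) 0 0 (J k e) 0 X21 X22)
    (row8 0 (J l b) 0 (J l d) Y11 Y12 0 (J l h))
    (row8 (J l a) 0 (J l c) 0 Y21 Y22 (J l g) 0).
Arguments Amat : clear implicits.
Arguments Emat : clear implicits.

From HB Require Import structures.
From mathcomp Require Import all_boot all_order all_algebra.
From mathcomp Require Import zify ring.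
Import Order.TTheory GRing.Theory Num.Theory.
Set Implicit Arguments.
Unset Strict Implicit.
Unset Printing Implicit Defensive.
Local Open Scope ring_scope.

(* Write E = p r + q s (pE, qE, rE, sE below), where the columns p, q are the
   signed indicators of the two pairs of row blocks and the rows r, s are the sign
   patterns of E.  For B = A + E both B B^T - A A^T and B^T B - A^T A then have
   the symmetric rank-two shape u p^T + p u^T + w q^T + q w^T.

   For the rows, u and w live on the row blocks of q and p respectively, so the
   expression vanishes iff w = t p and u = - t q for a single scalar t: the vectors
   X_i1 1 - X_i2 1 and Y_i1 1 - Y_i2 1 are constant, with constants determined by t.
   Once the column sums of X_1j and X_2j agree, the total sums of the two X vectors
   coincide, which forces 2 t = b - a + c - d; the balance conditions E 1 = 0 turn
   the four constants into (g - h) / 2 and (e - f) / 2.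

   For the columns, u and w are the differences of the column sums of X_1j, X_2j
   and of Y_1j, Y_2j, which vanish on the column blocks a, b, c, d where r and s
   are both +-1; testing against vectors supported there shows that the expression
   vanishes iff u = w = 0. *)

Section OuterSym2.
Variables (R : comPzRingType) (n : nat).
Implicit Types u p w q : 'cV[R]_n.

Definition outer_sym2 u p w q := u *m p^T + p *m u^T + w *m q^T + q *m w^T.

Lemma outer_sym2E u p w q i j :
  outer_sym2 u p w q i j
    = u i 0 * p j 0 + p i 0 * u j 0 + w i 0 * q j 0 + q i 0 * w j 0.
Proof. by rewrite !mxE !big_ord1 !mxE. Qed.

Lemma outer_sym2_eq0P u p w q (i j : 'I_n) :
  p i 0 = 1 -> q i 0 = 0 -> u i 0 = 0 -> q j 0 = 1 -> p j 0 = 0 -> w j 0 = 0 ->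
  outer_sym2 u p w q = 0 <-> exists t, u = - t *: q /\ w = t *: p.
Proof.
move=> pi1 qi0 ui0 qj1 pj0 wj0; split=> [/matrixP S0 | [t [-> ->]]]; last first.
  by apply/matrixP=> x y; rewrite outer_sym2E !mxE; ring.
have Sxy x y : u x 0 * p y 0 + p x 0 * u y 0 + w x 0 * q y 0 + q x 0 * w y 0 = 0.
  by rewrite -outer_sym2E S0 mxE.
have uE x : u x 0 = - w i 0 * q x 0.
  move: (Sxy x i); rewrite pi1 qi0 ui0 mulr1 !mulr0 !addr0.
  by move/eqP; rewrite addr_eq0 mulrC mulNr => /eqP.
have wE x : w x 0 = w i 0 * p x 0.
  move: (Sxy x j); rewrite pj0 qj1 wj0 (uE j) qj1 !mulr1 !mulr0 add0r addr0 addrC.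
  by move/eqP; rewrite addr_eq0 mulrN opprK mulrC => /eqP.
by exists (w i 0); split; apply/matrixP=> x y; rewrite ord1 mxE; [exact: uE | exact: wE].
Qed.

Lemma outer_sym2_mul_orth u p w q x (al be : R) :
  u^T *m x = 0 -> w^T *m x = 0 -> p^T *m x = al%:M -> q^T *m x = be%:M ->
  outer_sym2 u p w q *m x = al *: u + be *: w.
Proof.
move=> ux wx px qx.
by rewrite !mulmxDl -!mulmxA ux wx px qx !mulmx0 !addr0 !mul_mx_scalar.
Qed.

Lemma gram_add_rank2 m (A : 'M[R]_(n, m)) p q (r s : 'rV_m) (c1 c2 t : R) :
  r *m r^T = (c1 *+ 2)%:M -> s *m s^T = (c2 *+ 2)%:M -> r *m s^T = t%:M ->
  let B := A + (p *m r + q *m s) in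
  B *m B^T - A *m A^T
    = outer_sym2 (A *m r^T + c1 *: p + t *: q) p (A *m s^T + c2 *: q) q.
Proof.
move=> rr ss rs B; have sr : s *m r^T = t%:M by rewrite -[s]trmxK -trmx_mul rs tr_scalar_mx.
have rrX (X : 'cV_n) : X *m r *m r^T = (c1 *+ 2) *: X by rewrite -mulmxA rr mul_mx_scalar.
have ssX (X : 'cV_n) : X *m s *m s^T = (c2 *+ 2) *: X by rewrite -mulmxA ss mul_mx_scalar.
have rsX (X : 'cV_n) : X *m r *m s^T = t *: X by rewrite -mulmxA rs mul_mx_scalar.
have srX (X : 'cV_n) : X *m s *m r^T = t *: X by rewrite -mulmxA sr mul_mx_scalar.
rewrite /B /outer_sym2 !linearD /= !linearZ /= !trmx_mul !trmxK !(mulmxDl, mulmxDr) !mulmxA.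
rewrite ?rrX ?ssX ?rsX ?srX -?scalemxAl.
move: (A *m A^T) (A *m r^T *m p^T) (A *m s^T *m q^T) (p *m r *m A^T) (q *m s *m A^T)
  (p *m p^T) (q *m q^T) (p *m q^T) (q *m p^T) => *.
by apply/matrixP=> i j; rewrite !mxE; ring.
Qed.
End OuterSym2.

Lemma eq_iff_subr0 (V : zmodType) (x y : V) : x = y <-> y - x = 0.
Proof. by split=> [-> | /subr0_eq ->]; rewrite ?subrr. Qed.

Lemma addr_scale_eq (R : pzRingType) (V : lmodType R) (v w : V) (x y : R) :
  v + x *: w = y *: w <-> v = (y - x) *: w.
Proof. by rewrite scalerBl; split=> [<- | ->]; rewrite ?addrK ?subrK. Qed.

Lemma eq_col4 (R : Type) m1 m2 m3 m4 n (A1 B1 : 'M[R]_(m1, n)) (A2 B2 : 'M[R]_(m2, n))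
    (A3 B3 : 'M[R]_(m3, n)) (A4 B4 : 'M[R]_(m4, n)) :
  col_mx A1 (col_mx A2 (col_mx A3 A4)) = col_mx B1 (col_mx B2 (col_mx B3 B4)) <->
  [/\ A1 = B1, A2 = B2, A3 = B3 & A4 = B4].
Proof.
by split=> [/eq_col_mx[-> /eq_col_mx[-> /eq_col_mx[-> ->]]] | [-> -> -> ->]].
Qed.

Lemma trmx_J m n : (J m n)^T = J n m.
Proof. exact: trmx_const. Qed.

Lemma mulmx_JJ m n p : J m n *m J n p = n%:R *: J m p.
Proof.
apply/matrixP=> i j; rewrite !mxE.
under eq_bigr do rewrite !mxE mulr1.
by rewrite sumr_const card_ord mulr1.
Qed.

Lemma J_col m1 m2 n : J (m1 + m2) n = col_mx (J m1 n) (J m2 n).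
Proof. by rewrite /J col_mx_const. Qed.

Lemma sum_scaleJ_inj k (x y : int) : (0 < k)%N ->
  J 1 k *m (x *: J k 1) = J 1 k *m (y *: J k 1) -> x = y.
Proof.
move=> k_gt0; rewrite -!scalemxAr mulmx_JJ => /matrixP/(_ 0 0).
rewrite !mxE => /mulIf; apply.
by rewrite mulr1 pnatr_eq0 -lt0n.
Qed.

Lemma is01_col_mx m1 m2 n (A1 : 'M[int]_(m1, n)) (A2 : 'M[int]_(m2, n)) :
  is01 A1 -> is01 A2 -> is01 (col_mx A1 A2).
Proof.
move=> A1_01 A2_01 i j; rewrite -(splitK i).
by case: (split i) => i'; rewrite ?col_mxEu ?col_mxEd.
Qed.

Lemma is01_row_mx m n1 n2 (A1 : 'M[int]_(m, n1)) (A2 : 'M[int]_(m, n2)) :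
  is01 A1 -> is01 A2 -> is01 (row_mx A1 A2).
Proof.
move=> A1_01 A2_01 i j; rewrite -(splitK j).
by case: (split j) => j'; rewrite ?row_mxEl ?row_mxEr.
Qed.

Lemma is01_J m n : is01 (J m n).
Proof. by move=> i j; right; rewrite mxE. Qed.

Lemma is01_0 m n : is01 (0 : 'M[int]_(m, n)).
Proof. by move=> i j; left; rewrite mxE. Qed.

Lemma gram_matesP m n (A B : 'M[int]_(m, n)) : is01 A -> is01 B -> A <> B ->
  gram_mates A B <-> A *m A^T = B *m B^T /\ A^T *m A = B^T *m B.
Proof. by move=> A01 B01 AB; split=> [[] | []]. Qed.

Ltac is01_blocks :=
  rewrite /col4 /row8;
  repeat first [apply: is01_col_mx | apply: is01_row_mx | apply: is01_J | apply: is01_0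
               | assumption].

Ltac block_simpl :=
  rewrite ?tr_col_mx ?tr_row_mx ?linearN /= ?trmx0 ?trmx_J;
  repeat progress rewrite ?mul_col_mx ?mul_mx_row ?mul_row_col ?tr_col_mx ?tr_row_mx
    ?mulNmx ?mulmxN ?mul0mx ?mulmx0 ?mulmx_JJ ?scale1r ?opprK ?oppr0
    ?scale_col_mx ?scale_row_mx ?scalerN ?add_col_mx ?add_row_mx ?opp_col_mx
    ?opp_row_mx ?addr0 ?add0r ?scaler0 ?scale0r ?row_mx0 ?col_mx0.

Ltac block_congr :=
  repeat match goal with
  | |- col_mx _ _ = col_mx _ _ => congr (col_mx _ _)
  | |- row_mx _ _ = row_mx _ _ => congr (row_mx _ _)
  | |- col_mx _ _ = 0 => rewrite -col_mx0; congr (col_mx _ _)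
  | |- 0 = col_mx _ _ => rewrite -col_mx0; congr (col_mx _ _)
  | |- row_mx _ _ = 0 => rewrite -row_mx0; congr (row_mx _ _)
  end.

Ltac entries_lia :=
  try reflexivity;
  repeat match goal with |- context [?X *m ?Y] =>
    let m := fresh "m" in set m := X *m Y; clearbody m end;
  apply/matrixP=> ? ?; rewrite ?mxE ?ord1 ?eqxx ?mulr1n;
  repeat match goal with |- context [@fun_of_matrix _ _ _ ?M ?i ?j] => is_var M;
    let z := fresh "z" in set z := @fun_of_matrix _ _ _ M i j; clearbody z end;
  lia.

Section Rank2.
Variables k l a b c d e f g h : nat.

Definition pE : 'cV[int]_(k + (k + (l + l))) := col4 (J k 1) (- J k 1) 0 0.
Definition qE : 'cV[int]_(k + (k + (l + l))) := col4 0 0 (J l 1) (- J l 1).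
Definition rE := row8 (J 1 a) (J 1 b) (- J 1 c) (- J 1 d) (J 1 e) (- J 1 f)
  (0 : 'rV_g) (0 : 'rV_h).
Definition sE := row8 (J 1 a) (- J 1 b) (J 1 c) (- J 1 d) (0 : 'rV_e) (0 : 'rV_f)
  (J 1 g) (- J 1 h).

Lemma Emat_rank2 : Emat k l a b c d e f g h = pE *m rE + qE *m sE.
Proof. by rewrite /Emat /pE /qE /rE /sE /col4 /row8; block_simpl. Qed.

Lemma pE_pE : pE^T *m pE = (k%:Z *+ 2)%:M.
Proof. rewrite /pE /col4; block_simpl; entries_lia. Qed.

Lemma qE_qE : qE^T *m qE = (l%:Z *+ 2)%:M.
Proof. rewrite /qE /col4; block_simpl; entries_lia. Qed.

Lemma pE_qE : pE^T *m qE = 0%:M.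
Proof. rewrite /pE /qE /col4; block_simpl; entries_lia. Qed.

Lemma rE_rE : rE *m rE^T = (a + b + c + d + e + f)%:R%:M.
Proof. rewrite /rE /row8; block_simpl; entries_lia. Qed.

Lemma sE_sE : sE *m sE^T = (a + b + c + d + g + h)%:R%:M.
Proof. rewrite /sE /row8; block_simpl; entries_lia. Qed.

Lemma rE_sE : rE *m sE^T = (a%:Z - b%:Z - c%:Z + d%:Z)%:M.
Proof. rewrite /rE /sE /row8; block_simpl; entries_lia. Qed.

Lemma sE_rE : sE *m rE^T = (a%:Z - b%:Z - c%:Z + d%:Z)%:M.
Proof. rewrite /rE /sE /row8; block_simpl; entries_lia. Qed.

Lemma rE_J : rE *m J _ 1 = (a%:Z + b%:Z - c%:Z - d%:Z + e%:Z - f%:Z)%:M.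
Proof. rewrite /rE /row8 !J_col; block_simpl; entries_lia. Qed.

Lemma sE_J : sE *m J _ 1 = (a%:Z - b%:Z + c%:Z - d%:Z + g%:Z - h%:Z)%:M.
Proof. rewrite /sE /row8 !J_col; block_simpl; entries_lia. Qed.

Definition row_idx1 (i : 'I_k) : 'I_(k + (k + (l + l))) := lshift _ i.
Definition row_idx3 (j : 'I_l) : 'I_(k + (k + (l + l))) := rshift k (rshift k (lshift l j)).

Lemma pE_idx1 i : pE (row_idx1 i) 0 = 1.
Proof. by rewrite /pE /col4 col_mxEu mxE. Qed.

Lemma qE_idx1 i : qE (row_idx1 i) 0 = 0.
Proof. by rewrite /qE /col4 col_mxEu mxE. Qed.

Lemma pE_idx3 j : pE (row_idx3 j) 0 = 0.
Proof. by rewrite /pE /col4 !col_mxEd col_mxEu mxE. Qed.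

Lemma qE_idx3 j : qE (row_idx3 j) 0 = 1.
Proof. by rewrite /qE /col4 !col_mxEd col_mxEu mxE. Qed.

Lemma Emat_row_sums : (0 < k)%N -> (0 < l)%N -> Emat k l a b c d e f g h *m J _ 1 = 0 ->
  (a + b + e = c + d + f)%N /\ (a + c + g = b + d + h)%N.
Proof.
move=> k_gt0 l_gt0.
rewrite Emat_rank2 mulmxDl -!mulmxA rE_J sE_J !mul_mx_scalar => /matrixP E0.
move: (E0 (row_idx1 (Ordinal k_gt0)) 0) (E0 (row_idx3 (Ordinal l_gt0)) 0).
rewrite [pE]lock [qE]lock !mxE -!lock pE_idx1 qE_idx1 pE_idx3 qE_idx3.
split; lia.
Qed.

Lemma Emat_neq0 : (0 < k)%N -> (0 < a + b + c + d)%N -> Emat k l a b c d e f g h != 0.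
Proof.
move=> k_gt0 abcd_gt0; apply/eqP.
move=> /(congr1 (fun M => (M *m rE^T) (row_idx1 (Ordinal k_gt0)) 0)).
rewrite Emat_rank2 mulmxDl -!mulmxA rE_rE sE_rE !mul_mx_scalar mul0mx.
rewrite [pE]lock [qE]lock !mxE -!lock pE_idx1 qE_idx1; lia.
Qed.

Lemma outer_sym2_row8_eq0 (U1 : 'rV[int]_g) (U2 : 'rV[int]_h) (V1 : 'rV[int]_e)
    (V2 : 'rV[int]_f) :
  (0 < a + b + c + d)%N ->
  outer_sym2 (row8 0 0 0 0 0 0 U1 U2)^T rE^T (row8 0 0 0 0 V1 V2 0 0)^T sE^T = 0 ->
  [/\ U1 = 0, U2 = 0, V1 = 0 & V2 = 0].
Proof.
move=> abcd_gt0 S0.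
have nz : (a + b + c + d)%:Z != 0 by apply/eqP; lia.
set u := (row8 _ _ _ _ _ _ U1 U2)^T in S0; set w := (row8 _ _ _ _ V1 V2 _ _)^T in S0.
(* y1 and y3 live on the column blocks a, b, c, d, where u and w vanish and rE, sE
   are +-1; as u and w occupy disjoint blocks, the two relations separate them. *)
pose y1 := (row8 (J 1 a) (J 1 b) (- J 1 c) (- J 1 d) (0 : 'rV_e) (0 : 'rV_f) (0 : 'rV_g)
  (0 : 'rV_h))^T.
pose y3 := (row8 (J 1 a) (- J 1 b) (J 1 c) (- J 1 d) (0 : 'rV_e) (0 : 'rV_f) (0 : 'rV_g)
  (0 : 'rV_h))^T.
have S1 : (a + b + c + d)%:Z *: u + (a%:Z - b%:Z - c%:Z + d%:Z) *: w = 0.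
  rewrite -(mul0mx _ y1) -S0 (outer_sym2_mul_orth (al := (a + b + c + d)%:Z)
    (be := a%:Z - b%:Z - c%:Z + d%:Z)) //;
  by rewrite /u /w /y1 /rE /sE /row8 ?trmxK; block_simpl; entries_lia.
have S3 : (a%:Z - b%:Z - c%:Z + d%:Z) *: u + (a + b + c + d)%:Z *: w = 0.
  rewrite -(mul0mx _ y3) -S0 (outer_sym2_mul_orth (al := a%:Z - b%:Z - c%:Z + d%:Z)
    (be := (a + b + c + d)%:Z)) //;
  by rewrite /u /w /y3 /rE /sE /row8 ?trmxK; block_simpl; entries_lia.
move: S1 S3; rewrite /u /w /row8; block_simpl.
move=> /eqP; rewrite !col_mx_eq0 !scalemx_eq0 (negPf nz) !trmx_eq0 /=.
move=> /and4P[_ _ _ /and5P[_ _ _ /eqP-> /eqP->]].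
move=> /eqP; rewrite !col_mx_eq0 !scalemx_eq0 (negPf nz) !trmx_eq0 /=.
by move=> /and4P[_ _ _ /and5P[_ /eqP-> /eqP-> _ _]].
Qed.
End Rank2.

Section GramConditions.
Variables (k l a b c d e f g h : nat).
Variables (X11 : 'M[int]_(k, g)) (X12 : 'M[int]_(k, h))
  (X21 : 'M[int]_(k, g)) (X22 : 'M[int]_(k, h))
  (Y11 : 'M[int]_(l, e)) (Y12 : 'M[int]_(l, f))
  (Y21 : 'M[int]_(l, e)) (Y22 : 'M[int]_(l, f)).
Let A := Amat k l a b c d e f g h X11 X12 X21 X22 Y11 Y12 Y21 Y22.
Let B := A + Emat k l a b c d e f g h.
Local Notation p := (pE k l).
Local Notation q := (qE k l).
Local Notation r := (rE a b c d e f g h).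
Local Notation s := (sE a b c d e f g h).

Definition xdiff1 := X11 *m J g 1 - X12 *m J h 1.
Definition xdiff2 := X21 *m J g 1 - X22 *m J h 1.
Definition ydiff1 := Y11 *m J e 1 - Y12 *m J f 1.
Definition ydiff2 := Y21 *m J e 1 - Y22 *m J f 1.

Lemma Amat_mul_rE : (a + b + e = c + d + f)%N ->
  A *m r^T + (c + d + f)%:Z *: p + (a%:Z - b%:Z - c%:Z + d%:Z) *: q
    = col4 0 0 (ydiff1 + (a%:Z - c%:Z) *: J l 1) (ydiff2 + (b%:Z - d%:Z) *: J l 1).
Proof.
move=> rE_bal; rewrite /A /Amat /col4 /row8 /rE /pE /qE.
rewrite /ydiff1 /ydiff2; block_simpl; block_congr; entries_lia.
Qed.

Lemma Amat_mul_sE : (a + c + g = b + d + h)%N ->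
  A *m s^T + (b + d + h)%:Z *: q
    = col4 (xdiff1 + (c%:Z - d%:Z) *: J k 1) (xdiff2 + (a%:Z - b%:Z) *: J k 1) 0 0.
Proof.
move=> sE_bal; rewrite /A /Amat /col4 /row8 /sE /qE.
rewrite /xdiff1 /xdiff2; block_simpl; block_congr; entries_lia.
Qed.

Lemma row_gram_iff : (0 < k)%N -> (0 < l)%N ->
  (a + b + e = c + d + f)%N -> (a + c + g = b + d + h)%N ->
  A *m A^T = B *m B^T <->
  exists t : int, [/\ xdiff1 = (t - (c%:Z - d%:Z)) *: J k 1,
                      xdiff2 = (- t - (a%:Z - b%:Z)) *: J k 1,
                      ydiff1 = (- t - (a%:Z - c%:Z)) *: J l 1
                    & ydiff2 = (t - (b%:Z - d%:Z)) *: J l 1].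
Proof.
move=> k_gt0 l_gt0 rE_bal sE_bal.
have rr : r *m r^T = ((c + d + f)%:Z *+ 2)%:M.
  by rewrite rE_rE; congr (_%:M); rewrite mulr2n; lia.
have ss : s *m s^T = ((b + d + h)%:Z *+ 2)%:M.
  by rewrite sE_sE; congr (_%:M); rewrite mulr2n; lia.
rewrite eq_iff_subr0 /B Emat_rank2 (gram_add_rank2 _ _ _ rr ss (rE_sE _ _ _ _ _ _ _ _)).
rewrite Amat_mul_rE // Amat_mul_sE //.
rewrite (outer_sym2_eq0P (i := row_idx1 l (Ordinal k_gt0)) (j := row_idx3 k (Ordinal l_gt0)))
  ?pE_idx1 ?qE_idx1 ?pE_idx3 ?qE_idx3 //; last first.
- by rewrite /col4 /row_idx3 !col_mxEd col_mxEu mxE.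
- by rewrite /col4 /row_idx1 col_mxEu mxE.
split=> [[t [U V]] | [t [X1E X2E Y1E Y2E]]].
  move: U V; rewrite /pE /qE /col4 !scale_col_mx !scaler0.
  rewrite !scalerN -!scaleNr opprK => /eq_col4[_ _ Y1E Y2E] /eq_col4[X1E X2E _ _].
  by exists t; split; apply/addr_scale_eq.
exists t; rewrite /pE /qE /col4 !scale_col_mx !scaler0.
rewrite !scalerN -!scaleNr opprK.
by split; apply/eq_col4; split; rewrite // addr_scale_eq.
Qed.

Lemma pE_mul_Amat : p^T *m A + k%:Z *: r
  = row8 0 0 0 0 0 0 (J 1 k *m X11 - J 1 k *m X21) (J 1 k *m X12 - J 1 k *m X22).
Proof.
rewrite /A /Amat /col4 /row8 /rE /pE.
by block_simpl; block_congr; entries_lia.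
Qed.

Lemma qE_mul_Amat : q^T *m A + l%:Z *: s
  = row8 0 0 0 0 (J 1 l *m Y11 - J 1 l *m Y21) (J 1 l *m Y12 - J 1 l *m Y22) 0 0.
Proof.
rewrite /A /Amat /col4 /row8 /sE /qE.
by block_simpl; block_congr; entries_lia.
Qed.

Lemma col_gram_iff : (0 < a + b + c + d)%N ->
  A^T *m A = B^T *m B <->
  [/\ J 1 k *m X11 = J 1 k *m X21, J 1 k *m X12 = J 1 k *m X22,
      J 1 l *m Y11 = J 1 l *m Y21 & J 1 l *m Y12 = J 1 l *m Y22].
Proof.
move=> abcd_gt0.
have pp : p^T *m p^T^T = (k%:Z *+ 2)%:M by rewrite trmxK pE_pE.
have qq : q^T *m q^T^T = (l%:Z *+ 2)%:M by rewrite trmxK qE_qE.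
have pq : p^T *m q^T^T = 0%:M by rewrite trmxK pE_qE.
have BT : B^T = A^T + (r^T *m p^T + s^T *m q^T).
  by rewrite /B Emat_rank2 !linearD /= !trmx_mul.
have trD (v : 'cV_(k + (k + (l + l)))) x (w : 'rV_(a + (b + (c + (d + (e + (f + (g + h)))))))) :
    A^T *m v + x *: w^T = (v^T *m A + x *: w)^T.
  by rewrite linearD linearZ /= trmx_mul trmxK.
have -> : A^T *m A = A^T *m A^T^T by rewrite trmxK.
have -> : B^T *m B = B^T *m B^T^T by rewrite trmxK.
rewrite eq_iff_subr0.
rewrite BT (gram_add_rank2 _ _ _ pp qq pq) !trmxK scale0r addr0 !trD.
rewrite pE_mul_Amat qE_mul_Amat.
split=> [/outer_sym2_row8_eq0[] // | [-> -> -> ->]].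
  by move=> /subr0_eq ? /subr0_eq ? /subr0_eq ? /subr0_eq ?.
by rewrite !subrr /row8 !row_mx0 /outer_sym2 !trmx0 !mul0mx !mulmx0 !addr0.
Qed.

Lemma mul_blockX_pm :
  block_mx X11 X12 X21 X22 *m col_mx (J g 1) (- J h 1) = col_mx xdiff1 xdiff2.
Proof. by rewrite mul_block_col !mulmxN. Qed.

Lemma mul_blockY_pm :
  block_mx Y11 Y12 Y21 Y22 *m col_mx (J e 1) (- J f 1) = col_mx ydiff1 ydiff2.
Proof. by rewrite mul_block_col !mulmxN. Qed.

Lemma condition2_iff : (0 < k)%N ->
  (a + b + e = c + d + f)%N -> (a + c + g = b + d + h)%N ->
  J 1 k *m X11 = J 1 k *m X21 -> J 1 k *m X12 = J 1 k *m X22 ->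
  (exists t : int, [/\ xdiff1 = (t - (c%:Z - d%:Z)) *: J k 1,
                      xdiff2 = (- t - (a%:Z - b%:Z)) *: J k 1,
                      ydiff1 = (- t - (a%:Z - c%:Z)) *: J l 1
                    & ydiff2 = (t - (b%:Z - d%:Z)) *: J l 1]) <->
  [/\ (2 %| (g%:Z - h%:Z))%Z, (2 %| (e%:Z - f%:Z))%Z,
      block_mx X11 X12 X21 X22 *m col_mx (J g 1) (- J h 1)
        = ((g%:Z - h%:Z) %/ 2)%Z *: J (k + k) 1
    & block_mx Y11 Y12 Y21 Y22 *m col_mx (J e 1) (- J f 1)
        = ((e%:Z - f%:Z) %/ 2)%Z *: J (l + l) 1].
Proof.
move=> k_gt0 rE_bal sE_bal X1_sums X2_sums.
rewrite mul_blockX_pm mul_blockY_pm !J_col !scale_col_mx.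
split=> [[t [X1E X2E Y1E Y2E]] | [dvd_gh dvd_ef /eq_col_mx[X1E X2E] /eq_col_mx[Y1E Y2E]]].
  have ht : t - (c%:Z - d%:Z) = - t - (a%:Z - b%:Z).
    apply: (sum_scaleJ_inj k_gt0); rewrite -X1E -X2E /xdiff1 /xdiff2.
    by rewrite !mulmxBr !mulmxA X1_sums X2_sums.
  have gh : g%:Z - h%:Z = (t - (c%:Z - d%:Z)) * 2 by lia.
  have ef : e%:Z - f%:Z = (- t - (a%:Z - c%:Z)) * 2 by lia.
  rewrite gh ef !mulzK // !dvdz_mull // X1E X2E Y1E Y2E -ht.
  by split=> //; congr (col_mx (_ *: _) (_ *: _)); lia.
move: (divzK dvd_gh) (divzK dvd_ef) X1E X2E Y1E Y2E.
move: ((g%:Z - h%:Z) %/ 2)%Z ((e%:Z - f%:Z) %/ 2)%Z => dgh def gh ef -> -> -> ->.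
by exists (dgh + (c%:Z - d%:Z)); split; congr (_ *: _); lia.
Qed.

Lemma Amat_add_Emat : B = col4 (row8 (J k a) (J k b) 0 0 (J k e) 0 X11 X12)
                              (row8 0 0 (J k c) (J k d) 0 (J k f) X21 X22)
                              (row8 (J l a) 0 (J l c) 0 Y11 Y12 (J l g) 0)
                              (row8 0 (J l b) 0 (J l d) Y21 Y22 0 (J l h)).
Proof.
rewrite /B /A /Amat /Emat /col4 /row8; block_simpl.
by block_congr; entries_lia.
Qed.
End GramConditions.

Theorem theorem4p15 (k l a b c d e f g h : nat)
  (X11 : 'M[int]_(k, g)) (X12 : 'M[int]_(k, h))
  (X21 : 'M[int]_(k, g)) (X22 : 'M[int]_(k, h))
  (Y11 : 'M[int]_(l, e)) (Y12 : 'M[int]_(l, f))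
  (Y21 : 'M[int]_(l, e)) (Y22 : 'M[int]_(l, f)) :
  (0 < k)%N -> (0 < l)%N -> (0 < a + b + c + d)%N -> (0 < e + f)%N -> (0 < g + h)%N ->
  Emat k l a b c d e f g h *m J _ 1 = 0 ->
  J 1 _ *m Emat k l a b c d e f g h = 0 ->
  is01 X11 -> is01 X12 -> is01 X21 -> is01 X22 ->
  is01 Y11 -> is01 Y12 -> is01 Y21 -> is01 Y22 ->
  let A := Amat k l a b c d e f g h X11 X12 X21 X22 Y11 Y12 Y21 Y22 in
  gram_mates A (A + Emat k l a b c d e f g h) <->
  ((* condition 1: equal column sums *)
   [/\ J 1 k *m X11 = J 1 k *m X21, J 1 k *m X12 = J 1 k *m X22,
       J 1 l *m Y11 = J 1 l *m Y21 & J 1 l *m Y12 = J 1 l *m Y22]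
   /\
   (* condition 2 *)
   [/\ (2 %| (g%:Z - h%:Z))%Z,
       (2 %| (e%:Z - f%:Z))%Z,
       block_mx X11 X12 X21 X22 *m col_mx (J g 1) (- J h 1)
         = ((g%:Z - h%:Z) %/ 2)%Z *: J (k + k) 1
     & block_mx Y11 Y12 Y21 Y22 *m col_mx (J e 1) (- J f 1)
         = ((e%:Z - f%:Z) %/ 2)%Z *: J (l + l) 1]).
Proof.
move=> k_gt0 l_gt0 abcd_gt0 _ _ EJ0 _ X11_01 X12_01 X21_01 X22_01.
move=> Y11_01 Y12_01 Y21_01 Y22_01 A.
have [rE_bal sE_bal] := Emat_row_sums k_gt0 l_gt0 EJ0.
have A01 : is01 A by rewrite /A /Amat; is01_blocks.
have B01 : is01 (A + Emat k l a b c d e f g h) by rewrite /A Amat_add_Emat; is01_blocks.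
have AB : A <> A + Emat k l a b c d e f g h.
  move=> AE; have /eqP := Emat_neq0 l e f g h k_gt0 abcd_gt0; apply.
  by rewrite -[LHS](addKr A) -AE addNr.
rewrite gram_matesP // row_gram_iff // col_gram_iff //.
split=> [[rowP colP] | [colP cond2]]; split=> //; case: colP => C1 C2 _ _;
  by apply/(condition2_iff _ _ _ _ k_gt0 rE_bal sE_bal C1 C2).
Qed.
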